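(* Let $I=(i_1,\dots,i_k)$ be positive integers with sum $n$, and let $U,V\in S_n^I$ with $U\preceq V$ and $U\ne V$. Let $j_0$ be the least index with $U(j_0)\neq V(j_0)$. Then $U(j_0)<V(j_0)$. Let $l\ge j_0$ be maximal such that $V(j_0)=V(j_0+1)=\dots=V(l)$, and let $m$ be the least integer with $l\le m\le n$ satisfying $U(j_0)\le V(m)<V(l)$. Let $V'=V\circ(l,m)$, i.e. the string $(V(1),\dots,V(n))$ with the entries in positions $l$ and $m$ swapped. Then $U\preceq V'\preceq V$.
   Context: $S_n^I$ is the set of surjective maps $\tau\colon\{1,\dots,n\}\to\{1,\dots,k\}$ with $|\tau^{-1}(j)|=i_j$ for all $j$, written as strings $(\tau(1),\dots,\tau(n))$. Put $r_\tau[p,q]=\#\{j\le p:\ \tau(j)\ge q\}$; the Bruhat order on $S_n^I$ is $\tau\preceq\upsilon$ iff $r_\tau[p,q]\le r_\upsilon[p,q]$ for all $1\le p\le n$, $1\le q\le k$. *)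

(* Elements of S_n^I are represented as strings (seq nat)
   (tau(1), ..., tau(n)); positions and values are 1-based as in the paper. *)
From mathcomp Require Import all_boot.
Set Implicit Arguments. Unset Strict Implicit. Unset Printing Implicit Defensive.

(* composition I = (i_1, ..., i_k) is a seq nat; k = size I, n = sumn I *)

Definition at_ (tau : seq nat) (p : nat) : nat := nth 0 tau p.-1.

(* tau \in S_n^I : tau : {1..n} -> {1..k} with |tau^{-1}(q)| = i_q for all q
   (surjectivity follows since all i_q are positive). *)
Definition in_SnI (I : seq nat) (tau : seq nat) : Prop :=
  [/\ size tau = sumn I,
      all (fun x => 0 < x <= size I) tau &
      forall q, 1 <= q <= size I -> count_mem q tau = nth 0 I q.-1].

Definition rk (tau : seq nat) (p q : nat) : nat :=
  count (fun x => q <= x) (take p tau).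

Definition bruhat_le (I : seq nat) (tau ups : seq nat) : Prop :=
  forall p q, 1 <= p <= sumn I -> 1 <= q <= size I -> rk tau p q <= rk ups p q.

Definition swap_pos (V : seq nat) (l m : nat) : seq nat :=
  [seq at_ V (if j == l then m else if j == m then l else j) | j <- iota 1 (size V)].

From mathcomp Require Import all_boot zify.

(* The transposition (l, m) moves the smaller value V(m) to the left, so it
   lowers r_V[p, q] by one exactly on the rectangle l <= p < m,
   V(m) < q <= V(l), and changes nothing elsewhere; hence V' <= V.  On that
   rectangle r_U[p, q] < r_V[p, q]: raising the threshold from q1 = U(j0) to q
   costs U at least its entry at j0, while by the minimality of m no entry of V
   in positions j0..p lies in [q1, q), so V loses nothing; and
   r_U[p, q1] <= r_V[p, q1]. *)

Definition rk_in (tau : seq nat) (a b q : nat) : nat :=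
  \sum_(a <= j < b) (q <= at_ tau j).

Lemma rk_in_cat {tau : seq nat} {a b c q : nat} :
  a <= b <= c -> rk_in tau a c q = rk_in tau a b q + rk_in tau b c q.
Proof. by case/andP=> ab bc; rewrite /rk_in -big_cat_nat. Qed.

Lemma rk_in1 tau a q : rk_in tau a a.+1 q = (q <= at_ tau a).
Proof. by rewrite /rk_in big_nat1. Qed.

Lemma eq_rk_in tau tau' a b q q' :
  (forall j, a <= j < b -> (q <= at_ tau j) = (q' <= at_ tau' j)) ->
  rk_in tau a b q = rk_in tau' a b q'.
Proof. by move=> eq_ab; apply: eq_big_nat => j /eq_ab ->. Qed.

Lemma rk_rk_in tau p q : p <= size tau -> rk tau p q = rk_in tau 1 p.+1 q.
Proof.
elim: p => [|p IHp] le_p; first by rewrite /rk take0 /rk_in big_geq.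
rewrite /rk (take_nth 0) // -cats1 count_cat -/(rk tau p q) IHp ?(ltnW le_p) //.
by rewrite [RHS](@rk_in_cat _ 1 p.+1) ?rk_in1 /= ?addn0.
Qed.

Lemma rk_in_witness tau a b q q' j :
  a <= j < b -> q' <= at_ tau j < q -> rk_in tau a b q < rk_in tau a b q'.
Proof.
move=> /andP[aj jb] /andP[q'j jq].
have lt_q'q : q' < q by apply: leq_ltn_trans jq.
have mono c d : rk_in tau c d q <= rk_in tau c d q'.
  by apply: leq_sum => i _; case: (leqP q) => // /(leq_trans (ltnW lt_q'q)) ->.
rewrite !(@rk_in_cat tau a j b) ?aj ?(ltnW jb) //.
rewrite !(@rk_in_cat tau j j.+1 b) ?leqnSn //.
rewrite !rk_in1 q'j [q <= _]leqNgt jq /=.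
by have := mono a j; have := mono j.+1 b; lia.
Qed.

Lemma rk_in_gap tau a b q q' :
  q' <= q -> (forall j, a <= j < b -> ~~ (q' <= at_ tau j < q)) ->
  rk_in tau a b q' = rk_in tau a b q.
Proof.
move=> le_q'q gap; apply: eq_rk_in => j /gap.
case: (leqP q') => [_ /=|lt_q']; first by rewrite -leqNgt => ->.
by rewrite [q <= _]leqNgt (leq_trans lt_q' le_q'q).
Qed.

Section FirstDifference.

Variables (U V : seq nat) (j0 : nat).
Hypothesis j0_gt0 : 0 < j0.
Hypothesis eq_prefix : forall j, 0 < j < j0 -> at_ U j = at_ V j.

Let q1 := at_ U j0.

Lemma rk_in_prefix q : rk_in U 1 j0 q = rk_in V 1 j0 q.
Proof. by apply: eq_rk_in => j /eq_prefix ->. Qed.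

Lemma split_rk_at tau p q : j0 <= p <= size tau ->
  rk tau p q = rk_in tau 1 j0 q + rk_in tau j0 p.+1 q.
Proof.
case/andP=> j0p ptau; have j0_range : 1 <= j0 <= p.+1 by rewrite j0_gt0 leqW.
by rewrite rk_rk_in // (rk_in_cat j0_range).
Qed.

Lemma at_lt_of_rk_le : j0 <= size U -> j0 <= size V ->
  rk U j0 q1 <= rk V j0 q1 -> q1 != at_ V j0 -> q1 < at_ V j0.
Proof.
move=> j0U j0V; rewrite !split_rk_at ?leqnn ?j0U ?j0V // !rk_in1 rk_in_prefix.
by rewrite leq_add2l leqnn ltn_neqAle lt0b => -> ->.
Qed.

Lemma rk_lt_of_gap p q : j0 <= p -> p <= size U -> p <= size V -> q1 < q ->
  (forall j, j0 <= j <= p -> ~~ (q1 <= at_ V j < q)) ->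
  rk U p q1 <= rk V p q1 -> rk U p q < rk V p q.
Proof.
move=> j0p pU pV q1q gap.
rewrite !split_rk_at ?j0p ?pU ?pV // !rk_in_prefix.
rewrite !ltn_add2l leq_add2l => rkU_rkV.
rewrite -(@rk_in_gap V j0 p.+1 q q1 (ltnW q1q) gap); apply: leq_trans rkU_rkV.
by apply: (@rk_in_witness _ _ _ _ _ j0); rewrite ?leqnn ?ltnS ?j0p ?q1q.
Qed.

End FirstDifference.

Section Transposition.

Variables (V : seq nat) (l m : nat).
Hypotheses (l_gt0 : 0 < l) (lm : l < m) (mV : m <= size V).

Let V' := swap_pos V l m.

Lemma at_swap_pos j : 0 < j <= size V ->
  at_ V' j = at_ V (if j == l then m else if j == m then l else j).
Proof.
move=> j_range; rewrite /V' /swap_pos {1}/at_ (nth_map 0) ?size_iota; last lia.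
rewrite nth_iota; last lia.
by have -> : 1 + j.-1 = j by lia.
Qed.

Lemma rk_in_swap_pos_out a b q : 0 < a -> b <= (size V).+1 ->
  (forall j, a <= j < b -> j != l /\ j != m) -> rk_in V' a b q = rk_in V a b q.
Proof.
move=> a_gt0 bV out; apply: eq_rk_in => j j_ab; rewrite at_swap_pos; last lia.
by have [/negbTE-> /negbTE->] := out j j_ab.
Qed.

Lemma rk_swap_pos p q : p <= size V ->
  rk V' p q + ((l <= p < m) && (q <= at_ V l))
  = rk V p q + ((l <= p < m) && (q <= at_ V m)).
Proof.
move=> pV; have V'V : size V' = size V by rewrite size_map size_iota.
rewrite !rk_rk_in ?V'V //.
have at_l : at_ V' l = at_ V m by rewrite at_swap_pos ?eqxx //; lia.
have at_m : at_ V' m = at_ V l.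
  by rewrite at_swap_pos ?eqxx; [case: eqP => //; lia | lia].
have [pl | lp] := ltnP p l.
  by rewrite /= !addn0 rk_in_swap_pos_out //; lia.
have split_l : 1 <= l <= p.+1 by lia.
have split_l1 : l <= l.+1 <= p.+1 by lia.
rewrite !(rk_in_cat split_l) !(rk_in_cat split_l1) !rk_in1 at_l.
rewrite (@rk_in_swap_pos_out 1 l); [|lia..].
have [pm | mp] := ltnP p m.
  by rewrite (@rk_in_swap_pos_out l.+1 p.+1); lia.
have split_m : l.+1 <= m <= p.+1 by lia.
have split_m1 : m <= m.+1 <= p.+1 by lia.
rewrite !(rk_in_cat split_m) !(rk_in_cat split_m1) !rk_in1 at_m.
by rewrite (@rk_in_swap_pos_out l.+1 m) ?(@rk_in_swap_pos_out m.+1 p.+1); lia.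
Qed.

Lemma bruhat_le_swap_pos I : size V = sumn I -> at_ V m <= at_ V l ->
  bruhat_le I V' V.
Proof.
move=> VI le_ml p q /andP[_ pn] _.
have := @rk_swap_pos p q; rewrite VI => /(_ pn).
case: (l <= p < m) => /=; last by rewrite !addn0 => ->.
by case: (leqP q (at_ V m)) => [/leq_trans/(_ le_ml)->|_]; lia.
Qed.

End Transposition.

Theorem lemma2p11 (I U V : seq nat) :
  all (fun i => 0 < i) I ->
  in_SnI I U -> in_SnI I V ->
  bruhat_le I U V -> U <> V ->
  forall j0 : nat,
    1 <= j0 <= sumn I -> at_ U j0 != at_ V j0 ->
    (forall j, 1 <= j < j0 -> at_ U j = at_ V j) ->
    at_ U j0 < at_ V j0 /\
    (forall l : nat,
       j0 <= l <= sumn I ->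
       (forall j, j0 <= j <= l -> at_ V j = at_ V j0) ->
       (l = sumn I \/ at_ V l.+1 != at_ V j0) ->
       forall m : nat,
         l <= m <= sumn I ->
         at_ U j0 <= at_ V m < at_ V l ->
         (forall m', l <= m' < m -> ~~ (at_ U j0 <= at_ V m' < at_ V l)) ->
         bruhat_le I U (swap_pos V l m) /\ bruhat_le I (swap_pos V l m) V).
Proof.
move=> _ [sU aU _] [sV _ _] UleV _ j0 /andP[j0_gt0 j0n] neq_j0 eq_prefix.
have q1_range : 0 < at_ U j0 <= size I.
  by apply: (allP aU); rewrite /at_ mem_nth // sU; lia.
split=> [|l /andP[j0l ln] block _ m /andP[lm' mn] /andP[q1m ml] min_m].
  by apply: at_lt_of_rk_le; rewrite ?sU ?sV //; apply: UleV; rewrite ?j0_gt0.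
have lm : l < m.
  by rewrite ltn_neqAle lm' andbT; apply: contraTneq ml => ->; rewrite ltnn.
have l_gt0 : 0 < l := leq_trans j0_gt0 j0l.
have mV : m <= size V by rewrite sV.
split; last exact: bruhat_le_swap_pos l_gt0 lm mV I sV (ltnW ml).
move=> p q /andP[p_gt0 pn] q_range.
have := @rk_swap_pos V l m l_gt0 lm mV p q; rewrite sV => /(_ pn).
have := UleV p q; rewrite p_gt0 pn q_range => /(_ isT isT).
case: (leqP q (at_ V m)) => [/leq_trans/(_ (ltnW ml))->|mq]; first lia.
case: (leqP q (at_ V l)) => [ql|_]; last by rewrite andbF !addn0 => + ->.
rewrite andbT andbF addn0.
case: (boolP (l <= p < m)) => [/andP[lp pm] _ rkV'|_];
  last by rewrite addn0 => + ->.
suff: rk U p q < rk V p q by lia.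
apply: (@rk_lt_of_gap U V j0 j0_gt0 eq_prefix);
  rewrite ?sU ?sV ?(leq_trans j0l lp) ?(leq_ltn_trans q1m mq) //.
- move=> j /andP[j0j jp]; have [jl | lj] := leqP j l.
    by rewrite block ?j0j // -(block l) ?j0l ?leqnn // ltnNge ql andbF.
  apply: contra (min_m j _) => [/andP[-> /leq_trans->] //|].
  by rewrite (ltnW lj) (leq_ltn_trans jp pm).
- by apply: UleV; rewrite ?p_gt0.
Qed.
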